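(* Let $X\ni x$ be a smooth surface germ and let $g:X_n\to X_{n-1}\to\cdots\to X_1\to X_0:=X$ be a sequence of blow-ups with the data $(f_i,F_i,x_i\in X_i)$ whose dual graph $\mathcal{DG}$ (the dual graph of the composite morphism $X_n\to X$) is a chain. Let $n_3$ be the largest integer with $n_3\le n$ such that $x_i\in F_i\setminus F_{i-1}$ for all $1\le i\le n_3-1$, where $F_0:=\emptyset$. Index the vertices of $\mathcal{DG}$ as $\{E_j\}_{-n_1\le j\le n_2}$ so that $E_0:=F_n$ (the only $g$-exceptional $(-1)$-curve on $X_n$), $E_{n_2}:=F_1$, and $E_j$ is adjacent to $E_{j+1}$ for $-n_1\le j\le n_2-1$. Let $w_j:=-E_j\cdot E_j$, $W_1:=\sum_{j<0}w_j$ and $W_2:=\sum_{j>0}w_j$. Then $$(W_1-n_1)+n_3-1=W_2-n_2.$$ In particular, $n=n_1+n_2+1\le n_3+\min\{W_1,W_2\}$.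
   Context: Work over an algebraically closed field. A sequence of blow-ups $X_n\to\cdots\to X_0:=X$ with the data $(f_i,F_i,x_i\in X_i)$ means: for $1\le i\le n$, $f_i:X_i\to X_{i-1}$ is the blow-up at a closed point $x_{i-1}\in X_{i-1}$ with exceptional curve $F_i$, where $x_0:=x$, and $x_i\in F_i$ for $1\le i\le n-1$; strict transforms of $F_i$ on later $X_j$ are again denoted $F_i$. The dual graph has the $n$ exceptional curves $F_1,\dots,F_n$ on $X_n$ as vertices, weights $-F_i\cdot F_i$, and edges given by intersection numbers; a chain is a path (tree without vertices of degree $\ge3$). In this situation $F_1$ is an end vertex of the chain. *)

(* Combinatorial model of a sequence of point blow-ups of a
   smooth surface germ, tracking the weighted dual graph of F_1,...,F_k. *)
From mathcomp Require Import all_boot all_algebra.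
Set Implicit Arguments. Unset Strict Implicit. Unset Printing Implicit Defensive.

(* A weighted dual graph on vertices 1..k:
   .1 v = weight -F_v.F_v, .2 u v = true iff F_u . F_v = 1 (u <> v). *)
Definition dgraph := ((nat -> nat) * (nat -> nat -> bool))%type.

(* Blow-up number k+1 (f_{k+1}: X_{k+1} -> X_k) at x_k.
   For k = 0, x_0 lies on no exceptional curve.  For k >= 1, x_k lies on F_k
   and, if o = Some j, also on F_j (then x_k = F_k cap F_j); if o = None, x_k
   lies on no F_j with j <> k.  Strict transforms of curves through x_k get
   weight +1, their mutual intersection (transversal, one point) disappears,
   and the new curve F_{k+1} (weight 1) meets exactly the curves through x_k. *)
Definition blowup (st : dgraph) (k : nat) (o : option nat) : dgraph :=
  let on v := (0 < k) && ((v == k) || (o == Some v)) in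
  (fun v => if v == k.+1 then 1 else st.1 v + on v,
   fun u v => if u == k.+1 then on v && (v != k.+1)
              else if v == k.+1 then on u
              else st.2 u v && ~~ (on u && on v)).

(* Dual graph of X_k -> X; c i describes the position of x_i (1 <= i). *)
Fixpoint dg (c : nat -> option nat) (k : nat) : dgraph :=
  match k with
  | 0 => (fun _ => 0, fun _ _ => false)
  | k'.+1 => blowup (dg c k') k' (c k')
  end.

Definition valid_seq (n : nat) (c : nat -> option nat) : Prop :=
  forall i j, 1 <= i -> i < n -> c i = Some j -> j < i /\ (dg c i).2 j i.

(* "x_i in F_i \ F_{i-1} for all 1 <= i <= m-1" (F_0 = empty). *)
Definition free_prefix (c : nat -> option nat) (m : nat) : Prop :=
  forall i, 1 <= i -> i <= m.-1 -> c i <> Some i.-1.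

Definition consec (s : seq nat) (u v : nat) : bool :=
  has (fun i => ((nth 0 s i == u) && (nth 0 s i.+1 == v)) ||
                ((nth 0 s i == v) && (nth 0 s i.+1 == u)))
      (iota 0 (size s).-1).

Definition chain_order (n : nat) (g : dgraph) (s : seq nat) : Prop :=
  perm_eq s (iota 1 n) /\
  (forall u v, u \in s -> v \in s -> u != v -> g.2 u v = consec s u v).

From mathcomp Require Import all_boot all_algebra zify.
Import GRing.Theory.

(* Measure each side of F_k in the chain of X_k -> X by its excess, the sum
   of w_v - 1 over its vertices.  After the first n3 blow-ups the chain is
   F_n3, F_(n3-1), ..., F_1 with weights 1, 2, ..., 2: the left side is empty
   and the right side has excess n3 - 1.  Every later centre x_k is the
   intersection of F_k with another curve F_j: for k = n3 by maximality of
   n3, and for k > n3 because F_k already meets two curves, so a free centre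
   would give it a third neighbour in a chain (chains survive blowing down).
   Blowing up x_k puts F_(k+1) between F_k and F_j and raises both weights by
   one.  Since F_k had weight 1, i.e. excess 0, it does not matter on which
   side of F_(k+1) it ends up, and both sides gain exactly 1; so
   "left excess + n3 - 1 = right excess" persists up to k = n.  The
   inequality follows since every weight but that of F_n is at least 2. *)

Lemma consec_cons x y t u v :
  consec [:: x, y & t] u v = consec [:: x; y] u v || consec (y :: t) u v.
Proof.
rewrite /consec /= (iotaDl 1 0) has_map /= orbF.
by congr (_ || _); apply: eq_has.
Qed.

Lemma consec2E x y u v :
  consec [:: x; y] u v = (x == u) && (y == v) || (x == v) && (y == u).
Proof. by rewrite /consec /= orbF. Qed.

Lemma consec_cat a b u v : consec (a ++ b) u v =
  [|| consec a u v, consec b u v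
    | [&& a != [::], b != [::] & consec [:: last 0 a; head 0 b] u v]].
Proof.
elim: a => [|x a IH]; first by rewrite /= orbF.
case: a IH => [_|y a IH].
  by case: b => [|z b] //=; rewrite consec_cons orbC.
by rewrite /= consec_cons IH [consec [:: x, y & a] _ _]consec_cons -!orbA.
Qed.

Lemma consec_sym s u v : consec s u v = consec s v u.
Proof. by apply: eq_has => i; rewrite orbC. Qed.

Lemma consec_mem s u v : consec s u v -> u \in s.
Proof.
case/hasP=> i; rewrite mem_iota add0n -subn1 ltn_subRL add1n => /andP[_ lti].
by case/orP=> /andP[] => [/eqP <- _|_ /eqP <-]; rewrite mem_nth // ltnW.
Qed.

Lemma consec_infix a b u v : consec (a ++ [:: u, v & b]) u v.
Proof. by rewrite consec_cat consec_cons consec2E !eqxx orbT. Qed.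

Lemma consec_neighbor a x b u : uniq (a ++ x :: b) ->
  consec (a ++ x :: b) x u ->
  a != [::] /\ u = last 0 a \/ b != [::] /\ u = head 0 b.
Proof.
rewrite cat_uniq /= => /and4P[_ /norP[xNa _] xNb _].
have xNconsec r : x \notin r -> consec r x u = false.
  by move=> xNr; apply/negP => /consec_mem; apply/negP.
have lastNx : a != [::] -> last 0 a != x.
  case/lastP: a xNa => // a' y xNa _; rewrite last_rcons.
  by apply: contraNneq xNa => <-; rewrite mem_rcons mem_head.
have headNx : b != [::] -> head 0 b != x.
  by case: b xNb => // z b' xNb _; apply: contraNneq xNb => <-; rewrite mem_head.
rewrite consec_cat -cat1s consec_cat (xNconsec a) // (xNconsec b) //=.
rewrite !consec2E !eqxx /= !andbT.
case/orP=> /andP[ne]; rewrite ?(negbTE (lastNx ne)) ?(negbTE (headNx ne)) /=.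
  by rewrite andbF orbF => /eqP->; right.
by move=> /eqP->; left.
Qed.
Arguments consec_neighbor {a x b u}.

Lemma consec_two_neighbors a x b u v : uniq (a ++ x :: b) -> u != v ->
  consec (a ++ x :: b) x u -> consec (a ++ x :: b) x v ->
  [&& a != [::], b != [::] & consec [:: last 0 a; head 0 b] u v].
Proof.
move=> s_uniq uNv /(consec_neighbor s_uniq) Nu /(consec_neighbor s_uniq) Nv.
rewrite consec2E.
case: Nu Nv uNv => -[Nu ->] [[Nv ->]|[Nv ->]];
  by rewrite ?eqxx // Nu Nv ?eqxx ?orbT.
Qed.
Arguments consec_two_neighbors {a x b u v}.

Lemma consec_end a x b p : uniq (a ++ x :: b) ->
  {in a ++ b, forall v, consec (a ++ x :: b) x v -> v = p} -> a = [::] \/ b = [::].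
Proof.
case/lastP: a => [|a z]; [by left | case: b => [|y b]; [by right | move=> s_uniq nbr]].
have z_p : z = p.
  by apply: nbr; rewrite ?mem_cat ?mem_rcons ?mem_head // consec_sym cat_rcons consec_infix.
have y_p : y = p by apply: nbr; rewrite ?mem_cat ?mem_head ?orbT // consec_infix.
move: s_uniq; rewrite cat_rcons cat_uniq => /and3P[_ _ /=].
by rewrite !inE z_p y_p eqxx orbT.
Qed.
Arguments consec_end {a x b p}.

Lemma consec_remove a x b u v : uniq (a ++ x :: b) ->
  u != x -> v != x -> u != v ->
  consec (a ++ b) u v =
  consec (a ++ x :: b) u v || consec (a ++ x :: b) x u && consec (a ++ x :: b) x v.
Proof.
move=> s_uniq uNx vNx uNv.
have consec_xl y : consec [:: x; y] u v = false.
  by rewrite consec2E ![x == _]eq_sym (negbTE uNx) (negbTE vNx).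
have consec_xr y : consec [:: y; x] u v = false.
  by rewrite consec2E ![x == _]eq_sym (negbTE uNx) (negbTE vNx) !andbF.
have consec_xb : consec (x :: b) u v = consec b u v.
  by rewrite -cat1s consec_cat /= consec_xl andbF orbF.
rewrite consec_cat [consec (a ++ x :: b) u v]consec_cat consec_xb /= consec_xr.
rewrite !andbF !orbF orbA.
congr (_ || _); apply/idP/idP => [|/andP[Nu Nv]].
  2: exact: consec_two_neighbors s_uniq uNv Nu Nv.
case/lastP: a {s_uniq consec_xb} => // a z.
case: b => [|y b]; rewrite /= ?andbF // => /andP[_].
have Nz : consec (rcons a z ++ x :: y :: b) x z.
  by rewrite consec_sym cat_rcons consec_infix.
have Ny : consec (rcons a z ++ x :: y :: b) x y by exact: consec_infix.
by rewrite last_rcons consec2E => /orP[]/andP[/eqP <- /eqP <-]; rewrite Nz Ny.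
Qed.
Arguments consec_remove {a x b u v}.

Lemma split_at_index (x : nat) s :
  x \in s -> s = take (index x s) s ++ x :: drop (index x s).+1 s.
Proof.
move=> x_in; rewrite -[in LHS](cat_take_drop (index x s) s).
by rewrite (drop_nth 0) ?index_mem // nth_index.
Qed.
Arguments split_at_index {x s}.

Lemma double_size_le_sum (w : nat -> nat) r :
  {in r, forall v, 1 < w v} -> 2 * size r <= \sum_(v <- r) w v.
Proof.
elim: r => [|v r IH] w_gt1; first by rewrite big_nil.
rewrite big_cons mulnS leq_add ?w_gt1 ?mem_head // IH // => u u_r.
by rewrite w_gt1 // inE u_r orbT.
Qed.

Section Excess.
Local Open Scope ring_scope.

Definition excess (w : nat -> nat) (r : seq nat) : int :=
  \sum_(v <- r) ((w v)%:Z - 1).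

Lemma excess_nil w : excess w [::] = 0.
Proof. by rewrite /excess big_nil. Qed.

Lemma excess_cons w v r : excess w (v :: r) = (w v)%:Z - 1 + excess w r.
Proof. by rewrite /excess big_cons. Qed.

Lemma excess_rcons w r v : excess w (rcons r v) = excess w r + ((w v)%:Z - 1).
Proof. by rewrite /excess -cats1 big_cat big_seq1. Qed.

Lemma excessE w r : excess w r = (\sum_(v <- r) w v)%N%:Z - (size r)%:Z.
Proof.
elim: r => [|v r IH]; first by rewrite excess_nil big_nil.
by rewrite excess_cons IH big_cons /=; lia.
Qed.

Lemma excess_weight2 w r : {in r, forall v, w v = 2%N} -> excess w r = (size r)%:Z.
Proof.
elim: r => [|v r IH] w2; first by rewrite excess_nil.
rewrite excess_cons IH => [|u u_r]; last by rewrite w2 // inE u_r orbT.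
by rewrite w2 ?mem_head //= -addn1 PoszD addrC.
Qed.

Lemma excess_shift w w' (p : pred nat) r :
  {in r, forall v, w' v = (w v + p v)%N} -> excess w' r = excess w r + (count p r)%:Z.
Proof.
elim: r => [|v r IH] wS; first by rewrite !excess_nil.
rewrite !excess_cons IH => [|u u_r]; last by rewrite wS // inE u_r orbT.
by rewrite wS ?mem_head //=; lia.
Qed.

Lemma excess_insert w w' a z y b :
  uniq (rcons a z ++ y :: b) ->
  {in rcons a z ++ y :: b, forall v, w' v = (w v + ((v == z) || (v == y)))%N} ->
  excess w' (rcons a z) = excess w (rcons a z) + 1 /\
  excess w' (y :: b) = excess w (y :: b) + 1.
Proof.
move=> s_uniq wS; have := s_uniq.
rewrite cat_uniq rcons_uniq => /and3P[/andP[zNa _] /hasPn yb_Na /andP[yNb _]].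
have yNaz : y \notin rcons a z by apply: yb_Na; rewrite mem_head.
have zNb : z \notin b.
  apply/negP => z_b; move: (yb_Na z).
  by rewrite inE z_b orbT mem_rcons mem_head => /(_ isT).
set p := fun v => (v == z) || (v == y).
have count0 r : {in r, forall v, v != z} -> {in r, forall v, v != y} -> count p r = 0%N.
  move=> rNz rNy; apply/eqP; rewrite -leqn0 leqNgt -has_count; apply/hasPn => v v_r.
  by rewrite /p negb_or rNz ?rNy.
have count_a : count p (rcons a z) = 1%N.
  rewrite -cats1 count_cat count0 => [| v v_a | v v_a].
  - by rewrite /= /p eqxx.
  - by apply: contraNneq zNa => <-.
  - by apply: contraNneq yNaz => <-; rewrite mem_rcons inE v_a orbT.
have count_b : count p (y :: b) = 1%N.
  rewrite /= count0 => [| v v_b | v v_b].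
  - by rewrite /p eqxx orbT.
  - by apply: contraNneq zNb => <-.
  - by apply: contraNneq yNb => <-.
rewrite !(excess_shift w w' p) ?count_a ?count_b // => v v_in; apply: wS.
  by rewrite mem_cat v_in orbT.
by rewrite mem_cat v_in.
Qed.

End Excess.

Arguments excess_insert {w w' a z y b}.

Definition on_center (c : nat -> option nat) (k v : nat) : bool :=
  (0 < k) && ((v == k) || (c k == Some v)).

Lemma on_center_some c k j v : 0 < k -> c k = Some j ->
  on_center c k v = (v == k) || (v == j).
Proof.
move=> k_gt0 ck; rewrite /on_center k_gt0 ck.
by congr (_ || _); apply/eqP/eqP => [[->]|->].
Qed.
Arguments on_center_some {c k j} v.

Lemma dg_weightS c k v : (dg c k.+1).1 v =
  if v == k.+1 then 1 else (dg c k).1 v + on_center c k v.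
Proof. by []. Qed.

Lemma dg_adjS c k u v : (dg c k.+1).2 u v =
  if u == k.+1 then on_center c k v && (v != k.+1)
  else if v == k.+1 then on_center c k u
  else (dg c k).2 u v && ~~ (on_center c k u && on_center c k v).
Proof. by []. Qed.

Lemma dg_weight_new c k : (dg c k.+1).1 k.+1 = 1.
Proof. by rewrite dg_weightS eqxx. Qed.

Lemma dg_weight_old c k v : v != k.+1 ->
  (dg c k.+1).1 v = (dg c k).1 v + on_center c k v.
Proof. by rewrite dg_weightS => /negbTE->. Qed.

Lemma dg_weight_ge2 c k v : 0 < v < k -> 1 < (dg c k).1 v.
Proof.
elim: k => [|k IH] /andP[v_gt0 v_le_k]; first by [].
rewrite dg_weight_old ?neq_ltn ?v_le_k //.
have [v_eq_k|v_lt_k] := eqVneq v k; last by have := IH; lia.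
case: k {IH v_le_k} v_eq_k v_gt0 => [->//|k ->].
by rewrite dg_weight_new /on_center eqxx.
Qed.

Lemma dg_adjC c k u v : (dg c k).2 u v = (dg c k).2 v u.
Proof.
elim: k u v => // k IH u v; rewrite !dg_adjS IH.
case: (u =P k.+1) => [uk|_]; case: (v =P k.+1) => [vk|_]; subst => /=;
  by rewrite ?andbT ?andbF // (andbC (on_center c k u)).
Qed.

Lemma dg_adjvv c k v : (dg c k).2 v v = false.
Proof.
elim: k => // k IH; rewrite dg_adjS.
by have [->|vNk] := eqVneq v k.+1; rewrite ?eqxx ?andbF ?IH.
Qed.

Lemma dg_adj_new c k v : v != k.+1 -> (dg c k.+1).2 k.+1 v = on_center c k v.
Proof. by rewrite dg_adjS eqxx => ->; rewrite andbT. Qed.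

Lemma dg_adj_free c k u v : c k = None -> u != k.+1 -> v != k.+1 ->
  (dg c k.+1).2 u v = (dg c k).2 u v.
Proof.
move=> ck_free uNk vNk.
rewrite dg_adjS (negbTE uNk) (negbTE vNk) /on_center ck_free !orbF.
case: (eqVneq u k) => [->|]; case: (eqVneq v k) => [->|] //=;
  by rewrite ?dg_adjvv ?andbF ?andbT.
Qed.

Lemma chain_order_uniq k g s : chain_order k g s -> uniq s.
Proof. by case=> /perm_uniq -> _; exact: iota_uniq. Qed.

Lemma chain_order_mem k g s v : chain_order k g s -> (v \in s) = (0 < v <= k).
Proof. by case=> /perm_mem -> _; rewrite mem_iota add1n ltnS. Qed.

Lemma chain_order_size k g s : chain_order k g s -> size s = k.
Proof. by case=> /perm_size -> _; rewrite size_iota. Qed.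

Arguments chain_order_uniq {k g s}.
Arguments chain_order_mem {k g s} v.
Arguments chain_order_size {k g s}.

Lemma chain_side_weights c k a b : chain_order k (dg c k) (a ++ k :: b) ->
  2 * size a <= \sum_(v <- a) (dg c k).1 v /\ 2 * size b <= \sum_(v <- b) (dg c k).1 v.
Proof.
move=> s_chain; have := chain_order_uniq s_chain.
rewrite cat_uniq /= => /and3P[_ /norP[kNa _] /andP[kNb _]].
have w_gt1 v : v \in a ++ k :: b -> v != k -> 1 < (dg c k).1 v.
  rewrite (chain_order_mem _ s_chain) => /andP[v_gt0 v_le] vNk.
  by apply: dg_weight_ge2; rewrite v_gt0 ltn_neqAle vNk.
split; apply: double_size_le_sum => v v_in; apply: w_gt1.
- by rewrite mem_cat v_in.
- by apply: contraNneq kNa => <-.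
- by rewrite mem_cat inE v_in !orbT.
- by apply: contraNneq kNb => <-.
Qed.
Arguments chain_side_weights {c k a b}.

Section ValidSequence.

Variables (n : nat) (c : nat -> option nat).
Hypothesis c_valid : valid_seq n c.

Lemma dg_adj0 k v : k <= n -> (dg c k).2 0 v = false.
Proof.
elim: k v => // k IH v k_lt_n; have {}IH := IH _ (ltnW k_lt_n).
rewrite dg_adjS IH andFb; case: ifP => // _; apply/negP.
case/andP=> k_gt0 /orP[/eqP k0|/eqP ck0]; first by rewrite -k0 in k_gt0.
by have [_] := c_valid _ _ k_gt0 k_lt_n ck0; rewrite IH.
Qed.

Lemma dg_adj_blowdown k u v : 0 < k < n ->
  u != k.+1 -> v != k.+1 -> u != v ->
  (dg c k).2 u v = (dg c k.+1).2 u v || (dg c k.+1).2 k.+1 u && (dg c k.+1).2 k.+1 v.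
Proof.
move=> /andP[k_gt0 k_lt_n] uNk vNk uNv.
rewrite !dg_adj_new // dg_adjS (negbTE uNk) (negbTE vNk).
case on_uv: (on_center c k u && on_center c k v); rewrite ?andbT ?orbF //= orbT.
move: on_uv; rewrite /on_center k_gt0 /=.
case/andP=> /orP[/eqP u_k|/eqP cku] /orP[/eqP v_k|/eqP ckv].
- by rewrite u_k v_k eqxx in uNv.
- by have [_] := c_valid _ _ k_gt0 k_lt_n ckv; rewrite u_k dg_adjC.
- by have [_] := c_valid _ _ k_gt0 k_lt_n cku; rewrite v_k.
- by move: cku; rewrite ckv => -[v_u]; rewrite v_u eqxx in uNv.
Qed.

Lemma chain_order_blowdown k a b : 0 < k < n ->
  chain_order k.+1 (dg c k.+1) (a ++ k.+1 :: b) -> chain_order k (dg c k) (a ++ b).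
Proof.
move=> k_range s_chain; have s_uniq := chain_order_uniq s_chain.
have kNab : k.+1 \notin a ++ b.
  by move: s_uniq; rewrite -cat1s uniq_catCA cat1s => /andP[].
have in_s u : u \in a ++ b -> u \in a ++ k.+1 :: b.
  by rewrite !mem_cat inE => /orP[] ->; rewrite ?orbT.
have neq_k u : u \in a ++ b -> u != k.+1 by apply: contraTneq => ->.
have k_in_s : k.+1 \in a ++ k.+1 :: b by rewrite mem_cat mem_head orbT.
case: s_chain => s_perm s_adj; split.
  have iotaSr : iota 1 k.+1 = iota 1 k ++ [:: k.+1].
    by have := iotaD 1 k 1; rewrite addn1 add1n.
  rewrite -(perm_cat2r [:: k.+1]) -catA -iotaSr.
  by apply: perm_trans s_perm; rewrite perm_cat2l perm_catC.
move=> u v u_in v_in uNv; have [u_s v_s] := (in_s u u_in, in_s v v_in).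
rewrite dg_adj_blowdown ?neq_k // (consec_remove s_uniq) ?neq_k //.
by rewrite !s_adj // eq_sym neq_k.
Qed.
Arguments chain_order_blowdown {k a b}.

Lemma chain_new_between k j a b : 0 < k < n -> c k = Some j ->
  chain_order k.+1 (dg c k.+1) (a ++ k.+1 :: b) ->
  exists A z y B, [/\ a = rcons A z, b = y :: B & z = k /\ y = j \/ z = j /\ y = k].
Proof.
move=> /andP[k_gt0 k_lt_n] ck s_chain.
have [j_lt_k jk_adj] := c_valid _ _ k_gt0 k_lt_n ck.
have j_gt0 : 0 < j by case: j {j_lt_k ck} jk_adj => //; rewrite dg_adj0 // ltnW.
have s_uniq := chain_order_uniq s_chain.
have x_in : k.+1 \in a ++ k.+1 :: b by rewrite (chain_order_mem _ s_chain) ltn0Sn leqnn.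
have x_adj v : 0 < v <= k -> consec (a ++ k.+1 :: b) k.+1 v = (v == k) || (v == j).
  move=> v_range; have v_lt : v < k.+1 by lia.
  have v_in : v \in a ++ k.+1 :: b by rewrite (chain_order_mem _ s_chain); lia.
  have [_ <-] := s_chain; rewrite ?(gtn_eqF v_lt) //.
  by rewrite dg_adj_new ?(ltn_eqF v_lt) // (on_center_some _ k_gt0 ck).
have x_k : consec (a ++ k.+1 :: b) k.+1 k by rewrite x_adj ?eqxx // k_gt0 leqnn.
have x_j : consec (a ++ k.+1 :: b) k.+1 j by rewrite x_adj ?eqxx ?orbT // j_gt0 ltnW.
have kNj : k != j by rewrite neq_ltn j_lt_k orbT.
have := consec_two_neighbors s_uniq kNj x_k x_j.
case/lastP: a {s_chain s_uniq x_in x_adj x_k x_j} => [|A z]; case: b => [|y B];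
  rewrite ?andbF //.
rewrite last_rcons /= consec2E => /andP[_ /orP[]/andP[/eqP <- /eqP <-]].
- by exists A, z, y, B; split => //; left.
- by exists A, z, y, B; split => //; right.
Qed.
Arguments chain_new_between {k j a b}.

Lemma next_center_not_free k j t : 0 < k -> k.+1 < n -> c k = Some j ->
  chain_order k.+2 (dg c k.+2) t -> c k.+1 <> None.
Proof.
move=> k_gt0 k_lt ck t_chain ck1.
have [j_lt_k jk_adj] := c_valid _ _ k_gt0 (ltnW k_lt) ck.
have j_gt0 : 0 < j by case: j {j_lt_k ck} jk_adj => //; rewrite dg_adj0 // ltnW // ltnW.
have x_in : k.+1 \in t by rewrite (chain_order_mem _ t_chain) ltn0Sn ltnW.
case/splitPr: x_in t_chain => a b t_chain.
have x_nbr v : 0 < v <= k.+2 -> k.+1 != v -> (dg c k.+2).2 k.+1 v ->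
    a != [::] /\ v = last 0 a \/ b != [::] /\ v = head 0 b.
  move=> v_range xNv; have [_ t_adj] := t_chain.
  have v_in : v \in a ++ k.+1 :: b by rewrite (chain_order_mem _ t_chain).
  have x_in : k.+1 \in a ++ k.+1 :: b by rewrite mem_cat mem_head orbT.
  by rewrite t_adj //; apply: consec_neighbor (chain_order_uniq t_chain).
have old_nbr u : u <= k -> (dg c k.+2).2 k.+1 u = on_center c k u.
  by move=> u_le_k; rewrite dg_adj_free // ?dg_adj_new //; lia.
have x_new : (dg c k.+2).2 k.+1 k.+2.
  by rewrite dg_adjC dg_adj_new /on_center ?eqxx //; lia.
have x_k : (dg c k.+2).2 k.+1 k by rewrite old_nbr // /on_center k_gt0 eqxx.
have x_j : (dg c k.+2).2 k.+1 j by rewrite old_nbr 1?ltnW // /on_center k_gt0 ck eqxx orbT.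
have := x_nbr k.+2 _ _ x_new; have := x_nbr k _ _ x_k; have := x_nbr j _ _ x_j.
lia.
Qed.

Variable s : seq nat.
Hypothesis chain_n : chain_order n (dg c n) s.

Lemma chain_order_below k : 0 < k <= n -> exists t, chain_order k (dg c k) t.
Proof.
move=> /andP[k_gt0 k_le_n].
have below d : d <= n - k -> exists t, chain_order (n - d) (dg c (n - d)) t.
  elim: d => [_|d IH d_lt]; first by exists s; rewrite subn0.
  have [t t_chain] := IH (ltnW d_lt).
  have n_d : n - d = (n - d.+1).+1 by lia.
  rewrite n_d in t_chain.
  have x_in : (n - d.+1).+1 \in t by rewrite (chain_order_mem _ t_chain) leqnn.
  case/splitPr: x_in t_chain => a b ab_chain.
  by exists (a ++ b); apply: (chain_order_blowdown _ ab_chain); lia.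
by have := below (n - k) (leqnn _); rewrite subKn.
Qed.

(* The identity of the theorem for X_k -> X, with F_k in the role of E_0. *)
Definition chain_balanced (m k : nat) : Prop :=
  forall a b, chain_order k (dg c k) (a ++ k :: b) -> last 0 (a ++ k :: b) = 1 ->
  (excess (dg c k).1 a + m%:Z - 1 = excess (dg c k).1 b)%R.

Lemma chain_balancedS m k j : 0 < k < n -> c k = Some j ->
  chain_balanced m k -> chain_balanced m k.+1.
Proof.
move=> k_range ck IH a b s_chain s_last; have /andP[k_gt0 _] := k_range.
have [A [z [y [B [a_eq b_eq zy]]]]] := chain_new_between k_range ck s_chain.
subst a b; have t_chain := chain_order_blowdown k_range s_chain.
have t_last : last 0 (rcons A z ++ y :: B) = 1 by move: s_last; rewrite !last_cat.
set w := (dg c k).1; set w' := (dg c k.+1).1.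
have w_k : w k = 1%N by rewrite /w -(prednK k_gt0) dg_weight_new.
have old : (excess w (rcons A z) + m%:Z - 1 = excess w (y :: B))%R.
  case: zy => -[z_k y_j]; subst z y.
  - move: t_chain t_last; rewrite cat_rcons => /IH/[apply].
    by rewrite excess_rcons w_k addr0.
  - by rewrite excess_cons w_k add0r; apply: IH.
have wS v : v \in rcons A z ++ y :: B -> w' v = (w v + ((v == z) || (v == y)))%N.
  rewrite (chain_order_mem _ t_chain) => /andP[_ v_le_k].
  have vNx : v != k.+1 by rewrite ltn_eqF.
  rewrite /w' dg_weight_old // (on_center_some _ k_gt0 ck).
  by case: zy => -[-> ->]; rewrite // orbC.
have [new_a new_b] := excess_insert (chain_order_uniq t_chain) wS.
by rewrite new_a new_b -old addrAC addrK subrK.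
Qed.
Arguments chain_balancedS {m k j}.

Section FreePrefix.

Variable n3 : nat.
Hypotheses (n_gt0 : 0 < n) (n3_le_n : n3 <= n) (n3_free : free_prefix c n3).
Hypothesis n3_max : forall m, m <= n -> free_prefix c m -> m <= n3.

Lemma n3_gt0 : 0 < n3.
Proof. by apply: n3_max => // i; lia. Qed.

Lemma center_free i : 0 < i < n3 -> c i = None.
Proof.
elim: i => // i IH /andP[_ i_lt]; case ci: (c i.+1) => [j|] //.
have [j_lt adj] := c_valid _ _ (ltn0Sn i) (leq_trans i_lt n3_le_n) ci.
move: adj; rewrite dg_adjC dg_adj_new ?ltn_eqF // /on_center.
case: (posnP i) => [-> //|i_gt0]; rewrite IH ?i_gt0 ?orbF /=; last by lia.
move=> /eqP j_i; exfalso; apply: (n3_free i.+1 (ltn0Sn i)); last by rewrite ci j_i.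
by rewrite -subn1; lia.
Qed.

Lemma dg_weight_free_prefix k v : k <= n3 -> 0 < v < k -> (dg c k).1 v = 2.
Proof.
elim: k => [|k IH] k_le /andP[v_gt0 v_lt]; first by [].
rewrite dg_weight_old ?ltn_eqF //.
have [v_k|v_lt_k] := eqVneq v k.
  move: v_gt0; rewrite v_k; case: k {IH v_lt k_le v_k} => // k _.
  by rewrite dg_weight_new /on_center eqxx.
rewrite IH ?v_gt0 /=; try lia.
by rewrite /on_center center_free ?(negbTE v_lt_k) ?andbF //; lia.
Qed.

Lemma dg_adj_free_prefix k u : 0 < k <= n3 -> (dg c k).2 k u -> u = k.-1.
Proof.
case: k => // k /andP[_ k_lt]; rewrite dg_adjS eqxx /on_center.
case/andP=> /andP[k_gt0 /orP[/eqP -> //|]].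
by rewrite center_free ?k_gt0.
Qed.

Lemma chain_balanced_base : chain_balanced n3 n3.
Proof.
move=> a b s_chain s_last; have [_ s_adj] := s_chain.
have s_uniq := chain_order_uniq s_chain.
have s_mem := chain_order_mem _ s_chain.
have n3Nab : n3 \notin a ++ b.
  by move: s_uniq; rewrite -cat1s uniq_catCA cat1s => /andP[].
have nbr : {in a ++ b, forall v, consec (a ++ n3 :: b) n3 v -> v = n3.-1}.
  move=> v v_ab; have n3Nv : n3 != v by apply: contraNneq n3Nab => ->.
  have v_in : v \in a ++ n3 :: b by move: v_ab; rewrite !mem_cat inE => /orP[]->; rewrite ?orbT.
  have x_in : n3 \in a ++ n3 :: b by rewrite mem_cat mem_head orbT.
  by rewrite -s_adj //; apply: dg_adj_free_prefix; rewrite n3_gt0 leqnn.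
have a_nil : a = [::].
  case: (consec_end s_uniq nbr) => // b_nil; subst b.
  move: (chain_order_size s_chain) s_last; rewrite size_cat last_cat /= => a_size n3_1.
  by apply/nilP; rewrite /nilp; lia.
subst a; rewrite excess_nil add0r (@excess_weight2 _ b) => [|v v_b].
  by have := chain_order_size s_chain; rewrite /= => <-; lia.
have : v \in [::] ++ n3 :: b by rewrite /= inE v_b orbT.
rewrite s_mem => /andP[v_gt0 v_le]; apply: dg_weight_free_prefix => //.
by rewrite v_gt0 ltn_neqAle v_le andbT; apply: contraNneq n3Nab => <-.
Qed.

Lemma center_satellite k : n3 <= k < n -> exists j, c k = Some j.
Proof.
elim: k => [|k IH] /andP[n3_le k_lt]; first by have := n3_gt0; lia.
case ck1: (c k.+1) => [j|]; first by exists j.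
exfalso; have [k_lt_n3|n3_le_k] := ltnP k n3.
  have : n3.+1 <= n3; last by rewrite ltnn.
  apply: n3_max => [|i i_gt0 i_le]; first by lia.
  have [i_lt_n3|i_ge_n3] := ltnP i n3.
    by apply: n3_free => //; rewrite -subn1; lia.
  have -> : i = k.+1 by lia.
  by rewrite ck1.
have [j ck] : exists j, c k = Some j by apply: IH; rewrite n3_le_k ltnW.
have k_gt0 : 0 < k by have := n3_gt0; lia.
have [t t_chain] : exists t, chain_order k.+2 (dg c k.+2) t by apply: chain_order_below.
exact: next_center_not_free k_gt0 k_lt ck t_chain ck1.
Qed.

Lemma chain_balanced_from_n3 k : n3 <= k <= n -> chain_balanced n3 k.
Proof.
elim: k => [|k IH] /andP[n3_le k_le]; first by have := n3_gt0; lia.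
have [<-|n3_ne] := eqVneq n3 k.+1; first exact: chain_balanced_base.
have [j ck] : exists j, c k = Some j by apply: center_satellite; lia.
by apply: (chain_balancedS _ ck); [have := n3_gt0; lia | apply: IH; lia].
Qed.

End FreePrefix.

End ValidSequence.

Arguments n3_gt0 {n c n3}.
Arguments chain_balanced_from_n3 {n c} c_valid {s} chain_n {n3}.

Theorem lemma4p1 (n : nat) (c : nat -> option nat) (n3 : nat) (s : seq nat) :
  1 <= n ->
  valid_seq n c ->
  (* n3 is the largest integer <= n with x_i in F_i \ F_{i-1}, 1 <= i <= n3-1 *)
  n3 <= n -> free_prefix c n3 ->
  (forall m, m <= n -> free_prefix c m -> m <= n3) ->
  (* the dual graph is a chain E_{-n1},...,E_{n2}, listed by s, with
     E_{n2} = F_1 the last entry and E_0 = F_n *)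
  chain_order n (dg c n) s ->
  last 0 s = 1 ->
  let w := (dg c n).1 in
  let n1 := index n s in
  let n2 := (size s - n1.+1)%N in
  let W1 := (\sum_(v <- take n1 s) w v)%N in
  let W2 := (\sum_(v <- drop n1.+1 s) w v)%N in
  ((W1%:Z - n1%:Z) + n3%:Z - 1 = W2%:Z - n2%:Z)%R /\
  n = (n1 + n2 + 1)%N /\ (n <= n3 + minn W1 W2)%N.
Proof.
move=> n_gt0 c_valid n3_le n3_free n3_max s_chain s_last w n1 n2 W1 W2.
have s_size := chain_order_size s_chain.
have n_in : n \in s by rewrite (chain_order_mem _ s_chain) n_gt0 leqnn.
have n1_lt : n1 < size s by rewrite index_mem.
have n3_gt0 := n3_gt0 n_gt0 n3_le n3_max.
have balanced := chain_balanced_from_n3 c_valid s_chain n_gt0 n3_le n3_free n3_max.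
rewrite (split_at_index n_in) -/n1 in s_chain s_last.
have [W1_ge W2_ge] := chain_side_weights s_chain.
have := balanced n; rewrite n3_le leqnn => /(_ isT _ _ s_chain s_last).
rewrite !excessE size_take n1_lt size_drop -/W1 -/W2 -/n2 => bal.
rewrite size_take n1_lt size_drop -/W1 -/W2 -/n2 in W1_ge W2_ge.
by split; [exact: bal | lia].
Qed.
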